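(* Let $\mathbf e=(1,1)$, $X=[-\frac34,\frac54]^2$, $Y=[-10,10]^2$, and for $\rho>0$ define on $X\times Y$ $$\psi_\rho(x,y)=\Big(\frac{\|x\|^2}{2}-1\Big)^2-\frac{\|y-\mathbf e\|^2}{2}+\frac{x^\top y}{2}-\frac\rho2\big[\mathbf e^\top y-\|x\|^2\big]_+^2 .$$ For every $\rho>1$, the problem $\min_{x\in X}\max_{y\in Y}\psi_\rho(x,y)$ has a unique first-order minimax (stationary) point $(x,y)\in X\times Y$, i.e. a unique point satisfying $0\in\nabla_x\psi_\rho(x,y)+\mathcal N_X(x)$ and $0\in-\nabla_y\psi_\rho(x,y)+\mathcal N_Y(y)$, namely $$(x,y)=\Big(-\tfrac34\mathbf e,\ \tfrac{10+18\rho}{16+32\rho}\mathbf e\Big),$$ which converges to $(-\frac34\mathbf e,\frac9{16}\mathbf e)$ as $\rho\to\infty$.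
   Context: $[z]_+=\max\{z,0\}$. $\mathcal N_C(z)=\{v:\langle v,z'-z\rangle\le0\ \forall z'\in C\}$ is the normal cone of a convex set $C$ at $z\in C$. *)

From Stdlib Require Import Reals.
From Coquelicot Require Import Coquelicot.
Open Scope R_scope.

Definition dot (u v : R * R) : R := fst u * fst v + snd u * snd v.
Definition nsq (u : R * R) : R := dot u u.
Definition e : R * R := (1, 1).
Definition vsub (u v : R * R) : R * R := (fst u - fst v, snd u - snd v).
Definition vscale (c : R) (u : R * R) : R * R := (c * fst u, c * snd u).

Definition pos (z : R) : R := Rmax z 0.

Definition inX (x : R * R) : Prop :=
  -3/4 <= fst x <= 5/4 /\ -3/4 <= snd x <= 5/4.
Definition inY (y : R * R) : Prop :=
  -10 <= fst y <= 10 /\ -10 <= snd y <= 10.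

Definition in_normal_cone (C : R * R -> Prop) (z v : R * R) : Prop :=
  C z /\ forall z', C z' -> dot v (vsub z' z) <= 0.

Definition psi (rho : R) (x y : R * R) : R :=
  (nsq x / 2 - 1) ^ 2 - nsq (vsub y e) / 2 + dot x y / 2
  - rho / 2 * (pos (dot e y - nsq x)) ^ 2.

(* Gradients, via partial derivatives (psi is C^1). *)
Definition grad_x (rho : R) (x y : R * R) : R * R :=
  (Derive (fun t => psi rho (t, snd x) y) (fst x),
   Derive (fun t => psi rho (fst x, t) y) (snd x)).
Definition grad_y (rho : R) (x y : R * R) : R * R :=
  (Derive (fun t => psi rho x (t, snd y)) (fst y),
   Derive (fun t => psi rho x (fst y, t)) (snd y)).

(* First-order minimax (stationary) point:
   0 ∈ ∇_x psi + N_X(x)   i.e.  -∇_x psi ∈ N_X(x),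
   0 ∈ -∇_y psi + N_Y(y)  i.e.   ∇_y psi ∈ N_Y(y). *)
Definition stationary (rho : R) (x y : R * R) : Prop :=
  in_normal_cone inX x (vscale (-1) (grad_x rho x y)) /\
  in_normal_cone inY y (grad_y rho x y).

Definition ystar (rho : R) : R := (10 + 18 * rho) / (16 + 32 * rho).

From Pilot Require Import Defs.
From Stdlib Require Import Reals Lra.
From Coquelicot Require Import Coquelicot.
Open Scope R_scope.

(* The conditions on y force y into the interior of Y, so grad_y psi = 0.  This makes the
   penalty active and expresses y and the gap e^T y - |x|^2 through x alone.  After this
   substitution the x-partial derivative in the larger coordinate of x is positive on X,
   so the normal cone condition pins that coordinate, hence both, to the lower bound -3/4.
   Since psi is invariant under swapping the two coordinates of x and of y simultaneously,
   everything reduces to the first coordinates. *)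

(* Importing Coquelicot again shadows [pos] with the projection of [posreal]. *)
Local Notation pos := Defs.pos.

Lemma pos_ge0 z : 0 <= pos z.
Proof. apply Rmax_r. Qed.

Lemma pos_id z : 0 <= z -> pos z = z.
Proof. apply Rmax_left. Qed.

Lemma pos_eq0 z : z <= 0 -> pos z = 0.
Proof. apply Rmax_right. Qed.

Lemma pos_sqr_taylor z h : Rabs (pos (z + h) ^ 2 - pos z ^ 2 - 2 * pos z * h) <= h * h.
Proof.
  unfold pos, Rmax.
  destruct (Rle_dec (z + h) 0), (Rle_dec z 0); apply Rabs_le; split; nra.
Qed.

Lemma is_derive_pos_sqr z : is_derive (fun s => pos s ^ 2) z (2 * pos z).
Proof.
  apply is_derive_Reals. intros eps Heps. exists (mkposreal eps Heps).
  intros h Hh0 Hh; simpl in Hh.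
  assert (Hh' : 0 < Rabs h) by now apply Rabs_pos_lt.
  assert (HN := pos_sqr_taylor z h).
  replace (h * h) with (Rabs h * Rabs h) in HN
    by (rewrite <- Rabs_mult; apply Rabs_pos_eq; nra).
  replace ((pos (z + h) ^ 2 - pos z ^ 2) / h - 2 * pos z)
    with ((pos (z + h) ^ 2 - pos z ^ 2 - 2 * pos z * h) / h) by (field; exact Hh0).
  unfold Rdiv; rewrite Rabs_mult, Rabs_inv.
  apply Rle_lt_trans with (Rabs h * Rabs h * / Rabs h).
  - apply Rmult_le_compat_r; [apply Rlt_le, Rinv_0_lt_compat|]; lra.
  - replace (Rabs h * Rabs h * / Rabs h) with (Rabs h) by (field; lra). exact Hh.
Qed.

Lemma is_derive_penalized (A q : R -> R) rho t dA dq l :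
  is_derive A t dA -> is_derive q t dq -> l = dA - rho * pos (q t) * dq ->
  is_derive (fun s => A s - rho / 2 * pos (q s) ^ 2) t l.
Proof.
  intros HA Hq ->.
  replace (dA - rho * pos (q t) * dq) with (dA - rho / 2 * (dq * (2 * pos (q t)))) by field.
  apply (is_derive_minus A (fun s => rho / 2 * pos (q s) ^ 2)); [exact HA|].
  apply is_derive_scal, (is_derive_comp (fun s => pos s ^ 2)); [apply is_derive_pos_sqr|exact Hq].
Qed.

(* e^T y - |x|^2 at x = (a, b), y = (c, d); dpsi_x and dpsi_y are the partial derivatives
   of psi in the first coordinates of x and of y. *)
Definition gap (a b c d : R) : R := c + d - (a * a + b * b).
Definition dpsi_x (rho a b c d : R) : R :=
  a * (a * a + b * b - 2) + c / 2 + 2 * rho * pos (gap a b c d) * a.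
Definition dpsi_y (rho a b c d : R) : R := 1 - c + a / 2 - rho * pos (gap a b c d).

Lemma gap_swap a b c d : gap b a d c = gap a b c d.
Proof. unfold gap; ring. Qed.

Lemma psi_swap rho a b c d : psi rho (a, b) (c, d) = psi rho (b, a) (d, c).
Proof.
  unfold psi, nsq, dot, vsub, e; cbn [fst snd].
  replace (1 * d + 1 * c - (b * b + a * a)) with (1 * c + 1 * d - (a * a + b * b)) by ring.
  field.
Qed.

Lemma is_derive_psi_x rho a b c d :
  is_derive (fun t => psi rho (t, b) (c, d)) a (dpsi_x rho a b c d).
Proof.
  unfold psi, nsq, dot, vsub, e, dpsi_x, gap; cbn [fst snd].
  eapply is_derive_penalized; [auto_derive; [exact I|reflexivity] ..|].
  rewrite !Rmult_1_l. field.
Qed.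

Lemma is_derive_psi_y rho a b c d :
  is_derive (fun t => psi rho (a, b) (t, d)) c (dpsi_y rho a b c d).
Proof.
  unfold psi, nsq, dot, vsub, e, dpsi_y, gap; cbn [fst snd].
  eapply is_derive_penalized; [auto_derive; [exact I|reflexivity] ..|].
  rewrite !Rmult_1_l. field.
Qed.

Lemma grad_x_psi rho a b c d :
  grad_x rho (a, b) (c, d) = (dpsi_x rho a b c d, dpsi_x rho b a d c).
Proof.
  unfold grad_x; cbn [fst snd]. f_equal; apply is_derive_unique.
  - apply is_derive_psi_x.
  - apply (is_derive_ext (fun t => psi rho (t, a) (d, c))).
    + intro t. symmetry. apply psi_swap.
    + apply is_derive_psi_x.
Qed.

Lemma grad_y_psi rho a b c d :
  grad_y rho (a, b) (c, d) = (dpsi_y rho a b c d, dpsi_y rho b a d c).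
Proof.
  unfold grad_y; cbn [fst snd]. f_equal; apply is_derive_unique.
  - apply is_derive_psi_y.
  - apply (is_derive_ext (fun t => psi rho (b, a) (t, c))).
    + intro t. symmetry. apply psi_swap.
    + apply is_derive_psi_y.
Qed.

Definition in_square (lo hi : R) (z : R * R) : Prop :=
  lo <= fst z <= hi /\ lo <= snd z <= hi.

Definition interval_normal (lo hi a v : R) : Prop :=
  lo <= a <= hi /\ (a < hi -> v <= 0) /\ (lo < a -> 0 <= v).

Lemma interval_normal_le lo hi a v z :
  interval_normal lo hi a v -> lo <= z <= hi -> v * (z - a) <= 0.
Proof.
  intros [Ha [Hhi Hlo]] Hz.
  destruct (Rlt_le_dec a hi) as [Ha1|Ha1], (Rlt_le_dec lo a) as [Ha2|Ha2].
  - assert (v = 0) by (specialize (Hhi Ha1); specialize (Hlo Ha2); lra). subst; lra.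
  - specialize (Hhi Ha1). nra.
  - specialize (Hlo Ha2). nra.
  - replace (z - a) with 0 by lra. lra.
Qed.

Lemma in_normal_cone_square lo hi a b v1 v2 :
  in_normal_cone (in_square lo hi) (a, b) (v1, v2) <->
  interval_normal lo hi a v1 /\ interval_normal lo hi b v2.
Proof.
  unfold in_normal_cone, in_square, interval_normal, dot, vsub; cbn [fst snd]. split.
  - intros [[Ha Hb] H].
    repeat split; try tauto; intro Hlt.
    + assert (Hz := H (hi, b) ltac:(cbn; lra)); cbn [fst snd] in Hz; nra.
    + assert (Hz := H (lo, b) ltac:(cbn; lra)); cbn [fst snd] in Hz; nra.
    + assert (Hz := H (a, hi) ltac:(cbn; lra)); cbn [fst snd] in Hz; nra.
    + assert (Hz := H (a, lo) ltac:(cbn; lra)); cbn [fst snd] in Hz; nra.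
  - intros [Ha Hb]. split; [tauto|].
    intros [z1 z2] [Hz1 Hz2]; cbn [fst snd] in *.
    assert (H1 := interval_normal_le lo hi a v1 z1 Ha Hz1).
    assert (H2 := interval_normal_le lo hi b v2 z2 Hb Hz2).
    lra.
Qed.

Lemma stationary_iff rho a b c d :
  stationary rho (a, b) (c, d) <->
  (interval_normal (-3/4) (5/4) a (- dpsi_x rho a b c d) /\
   interval_normal (-3/4) (5/4) b (- dpsi_x rho b a d c)) /\
  (interval_normal (-10) 10 c (dpsi_y rho a b c d) /\
   interval_normal (-10) 10 d (dpsi_y rho b a d c)).
Proof.
  unfold stationary. rewrite grad_x_psi, grad_y_psi. unfold vscale; cbn [fst snd].
  change inX with (in_square (-3/4) (5/4)). change inY with (in_square (-10) 10).
  rewrite !in_normal_cone_square, !(IZR_NEG 1), <- !Ropp_mult_distr_l, !Rmult_1_l.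
  reflexivity.
Qed.

Lemma interval_normal_lt0 lo hi a v : interval_normal lo hi a v -> v < 0 -> a = lo.
Proof.
  intros [Ha [_ Hlo]] Hv.
  destruct (Rlt_le_dec lo a) as [Hlt|Hle]; [specialize (Hlo Hlt); lra | lra].
Qed.

Lemma dpsi_y_eq0_of_normal rho a b c d : 0 < rho ->
  -3/4 <= a <= 5/4 -> -3/4 <= b <= 5/4 -> d <= 10 ->
  interval_normal (-10) 10 c (dpsi_y rho a b c d) -> dpsi_y rho a b c d = 0.
Proof.
  intros Hr Ha Hb Hd [Hc [Hhi Hlo]].
  assert (HP := pos_ge0 (gap a b c d)).
  destruct (Rlt_le_dec c 10) as [Hc1|Hc1], (Rlt_le_dec (-10) c) as [Hc2|Hc2].
  - specialize (Hhi Hc1); specialize (Hlo Hc2); lra.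
  - assert (Hg : gap a b c d <= 0) by (unfold gap; nra).
    specialize (Hhi Hc1). unfold dpsi_y in *. rewrite (pos_eq0 _ Hg) in *. lra.
  - specialize (Hlo Hc2). unfold dpsi_y in *. nra.
  - lra.
Qed.

Lemma dpsi_y_eq0_solve rho a b c d : 0 < rho ->
  -3/4 <= a <= 5/4 -> -3/4 <= b <= 5/4 ->
  dpsi_y rho a b c d = 0 -> dpsi_y rho b a d c = 0 ->
  0 < gap a b c d /\
  gap a b c d * (1 + 2 * rho) = 2 + (a + b) / 2 - (a * a + b * b) /\
  c = 1 + a / 2 - rho * gap a b c d /\ d = 1 + b / 2 - rho * gap a b c d.
Proof.
  unfold dpsi_y; rewrite (gap_swap a b c d). intros Hr Ha Hb Hc Hd.
  destruct (Rlt_le_dec 0 (gap a b c d)) as [Hg|Hg].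
  - rewrite (pos_id _ (Rlt_le _ _ Hg)) in Hc, Hd.
    repeat split; try lra. unfold gap in *. nra.
  - rewrite (pos_eq0 _ Hg) in Hc, Hd. unfold gap in *. nra.
Qed.

Lemma reduced_dpsi_x_pos rho a b S : 1 < rho ->
  -3/4 <= a <= 5/4 -> -3/4 <= b <= 5/4 -> b <= a ->
  S * (1 + 2 * rho) = 2 + (a + b) / 2 - (a * a + b * b) ->
  0 < a * (a * a + b * b - 2 + 2 * rho * S) + (1 + a / 2 - rho * S) / 2.
Proof.
  intros Hr Ha Hb Hab HS.
  (* With eps = 1/(2(1 + 2 rho)) the expression is affine in eps, nonnegative at eps = 0 and
     positive at eps = 1/6; rho > 1 means exactly eps < 1/6. *)
  set (D := 2 + (a + b) / 2 - (a * a + b * b)) in HS.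
  set (eps := / (2 * (1 + 2 * rho))).
  assert (Heps : 0 < eps < 1/6).
  { unfold eps. split; [apply Rinv_0_lt_compat; lra|].
    apply (Rmult_lt_reg_r (2 * (1 + 2 * rho))); [lra|]. field_simplify; lra. }
  assert (HrS : rho * S = (1/2 - eps) * D).
  { rewrite <- HS. unfold eps. field. lra. }
  set (G := (3 * a * a + 2 * a * b + b * b) / 4 + (a - b) / 8).
  set (H := G + D * (1/2 - 2 * a) / 6).
  assert (Hid : a * (a * a + b * b - 2 + 2 * rho * S) + (1 + a / 2 - rho * S) / 2
                = (1 - 6 * eps) * G + 6 * eps * H).
  { replace (2 * rho * S) with (2 * (rho * S)) by ring. rewrite HrS.
    unfold H, G, D. clearbody eps. field. }
  rewrite Hid.
  assert (HG : 0 <= G) by (unfold G; nra).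
  assert (HD : 1/8 <= D) by (unfold D; nra).
  assert (HH : 0 < H).
  { destruct (Rlt_le_dec a 0).
    - assert (0 < D * (1/2 - 2 * a)) by (apply Rmult_lt_0_compat; lra).
      unfold H. lra.
    - assert (Hsos : 12 * H = 4 * a * (b + 1/2) ^ 2 + 2 * (b - 1/4) ^ 2
                              + 4 * a * (a - 1/2) ^ 2 + 10 * (a - 2/5) ^ 2 + 11/40)
        by (unfold H, G, D; field).
      assert (0 <= a * (b + 1/2) ^ 2) by (apply Rmult_le_pos; [lra|apply pow2_ge_0]).
      assert (0 <= a * (a - 1/2) ^ 2) by (apply Rmult_le_pos; [lra|apply pow2_ge_0]).
      assert (0 <= (b - 1/4) ^ 2) by apply pow2_ge_0.
      assert (0 <= (a - 2/5) ^ 2) by apply pow2_ge_0.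
      lra. }
  nra.
Qed.

Lemma dpsi_x_pos rho a b c d : 1 < rho ->
  -3/4 <= a <= 5/4 -> -3/4 <= b <= 5/4 -> b <= a ->
  dpsi_y rho a b c d = 0 -> dpsi_y rho b a d c = 0 -> 0 < dpsi_x rho a b c d.
Proof.
  intros Hr Ha Hb Hab Hc Hd.
  destruct (dpsi_y_eq0_solve rho a b c d ltac:(lra) Ha Hb Hc Hd) as [Hg [HS [Hc' _]]].
  unfold dpsi_x. rewrite (pos_id _ (Rlt_le _ _ Hg)).
  set (S := gap a b c d) in *. rewrite Hc'.
  replace (a * (a * a + b * b - 2) + (1 + a / 2 - rho * S) / 2 + 2 * rho * S * a)
    with (a * (a * a + b * b - 2 + 2 * rho * S) + (1 + a / 2 - rho * S) / 2) by ring.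
  exact (reduced_dpsi_x_pos rho a b S Hr Ha Hb Hab HS).
Qed.

Lemma ystar_eq rho : 0 <= rho -> ystar rho = 9/16 + / (16 + 32 * rho).
Proof. intro Hr. unfold ystar. field. lra. Qed.

Lemma stationary_point rho a b c d : 1 < rho ->
  stationary rho (a, b) (c, d) ->
  a = -3/4 /\ b = -3/4 /\ c = ystar rho /\ d = ystar rho.
Proof.
  rewrite stationary_iff. intros Hr [[Ha Hb] [Hc Hd]].
  assert (Ha' : -3/4 <= a <= 5/4) by apply Ha.
  assert (Hb' : -3/4 <= b <= 5/4) by apply Hb.
  assert (Hc0 := dpsi_y_eq0_of_normal rho a b c d ltac:(lra) Ha' Hb' ltac:(apply Hd) Hc).
  assert (Hd0 := dpsi_y_eq0_of_normal rho b a d c ltac:(lra) Hb' Ha' ltac:(apply Hc) Hd).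
  assert (Hab : a = -3/4 /\ b = -3/4).
  { destruct (Rle_lt_dec b a) as [Hba|Hab].
    - assert (Hx := dpsi_x_pos rho a b c d Hr Ha' Hb' Hba Hc0 Hd0).
      assert (Ha0 := interval_normal_lt0 _ _ _ _ Ha ltac:(lra)). lra.
    - assert (Hx := dpsi_x_pos rho b a d c Hr Hb' Ha' ltac:(lra) Hd0 Hc0).
      assert (Hb0 := interval_normal_lt0 _ _ _ _ Hb ltac:(lra)). lra. }
  destruct Hab as [-> ->].
  destruct (dpsi_y_eq0_solve rho _ _ c d ltac:(lra) Ha' Hb' Hc0 Hd0) as [_ [HS [Hc' Hd']]].
  assert (Hgap : rho * gap (-3/4) (-3/4) c d = rho / (8 * (1 + 2 * rho))).
  { apply (Rmult_eq_reg_r (1 + 2 * rho)); [|lra].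
    rewrite Rmult_assoc, HS. field. lra. }
  rewrite Hgap in Hc', Hd'. rewrite Hc', Hd'. unfold ystar.
  repeat split; field; lra.
Qed.

Lemma stationary_at_point rho : 1 < rho ->
  stationary rho (-3/4, -3/4) (ystar rho, ystar rho).
Proof.
  intro Hr. rewrite stationary_iff.
  assert (Hinv : 0 < / (16 + 32 * rho) < 1/16).
  { split; [apply Rinv_0_lt_compat; lra|].
    apply (Rmult_lt_reg_l (16 + 32 * rho)); [lra|]. rewrite Rinv_r; lra. }
  assert (Hy : 0 < ystar rho < 1) by (rewrite ystar_eq; lra).
  assert (Hgap : gap (-3/4) (-3/4) (ystar rho) (ystar rho) = 2 / (16 + 32 * rho)).
  { unfold gap. rewrite ystar_eq by lra. field. lra. }
  assert (Hy0 : dpsi_y rho (-3/4) (-3/4) (ystar rho) (ystar rho) = 0).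
  { unfold dpsi_y. rewrite Hgap, pos_id.
    - unfold ystar. field. lra.
    - apply Rlt_le, Rdiv_lt_0_compat; lra. }
  assert (Hx : 0 < dpsi_x rho (-3/4) (-3/4) (ystar rho) (ystar rho))
    by (apply dpsi_x_pos; auto; lra).
  unfold interval_normal. repeat split; intros; lra.
Qed.

Lemma is_lim_ystar : is_lim ystar p_infty (9/16).
Proof.
  apply (is_lim_ext_loc (fun rho => 9/16 + / (16 + 32 * rho))).
  { exists 0. intros rho Hr. symmetry. apply ystar_eq. lra. }
  replace (Finite (9/16)) with (Finite (9/16 + 0)) by (f_equal; ring).
  apply is_lim_plus'; [apply is_lim_const|].
  change (Finite 0) with (Rbar_inv p_infty).
  apply is_lim_inv; [|discriminate].
  apply (is_lim_le_p_loc (fun rho => rho)); [|apply is_lim_id].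
  exists 0. intros rho Hr. lra.
Qed.

Theorem lemma4p1 :
  (forall rho : R, 1 < rho ->
     forall x y : R * R,
       stationary rho x y <->
       (x = vscale (-3/4) e /\ y = vscale (ystar rho) e))
  /\ is_lim ystar p_infty (9/16).
Proof.
  split; [|exact is_lim_ystar].
  intros rho Hr [a b] [c d].
  unfold vscale, e; cbn [fst snd]. rewrite !Rmult_1_r.
  split.
  - intro Hst.
    destruct (stationary_point rho a b c d Hr Hst) as [-> [-> [-> ->]]].
    split; reflexivity.
  - intros [Hx Hy]. injection Hx as -> ->. injection Hy as -> ->.
    exact (stationary_at_point rho Hr).
Qed.
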